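(* Let $E$ be a locally convex space. Then every bounded subset of $E$ is either tame, or contains a sequence which is an $l^1$-sequence.
   Context: ${\rm eqc}(E^* )$ is the family of equicontinuous weak-star compact subsets of the dual $E^*$. A sequence of real functions $(f_n)$ on a set $X$ is independent if there are $a<b$ with $\bigcap_{n\in P} f_n^{-1}(-\infty,a)\cap\bigcap_{n\in M} f_n^{-1}(b,\infty)\neq\emptyset$ for all finite disjoint $P,M\subseteq\mathbb N$; a bounded family of real functions is tame if it contains no independent sequence. A bounded $B\subseteq E$ is tame if for every $K\in{\rm eqc}(E^* )$ the family $\{\varphi\mapsto\varphi(b)\}_{b\in B}$ of functions on $K$ is tame. A bounded sequence $(x_n)$ in $E$ is an $l^1$-sequence if there exist a continuous seminorm $\rho$ on $E$ and $\delta>0$ with $\delta\sum_{i=1}^n|c_i|\le\rho(\sum_{i=1}^n c_ix_i)$ for all $n$ and real $c_1,\dots,c_n$. *)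

(* Real locally convex spaces = [tvsType R]
   (MathComp-Analysis' interface for locally convex topological vector
   spaces) over a [realType R]. *)
From HB Require Import structures.
From mathcomp Require Import all_boot all_order all_algebra.
From mathcomp Require Import all_classical all_reals all_analysis.

Set Implicit Arguments.
Unset Strict Implicit.
Unset Printing Implicit Defensive.

Import Order.TTheory GRing.Theory Num.Theory.
Import numFieldTopology.Exports numFieldNormedType.Exports.
Local Open Scope classical_set_scope.
Local Open Scope ring_scope.

Section LCS.
Variables (R : realType) (E : tvsType R).

Definition tvs_bounded (B : set E) : Prop :=
  forall U : set E, nbhs (0 : E) U ->
    exists2 r : R, 0 < r &
      forall t : R, r <= `|t| -> B `<=` [set t *: u | u in U].

Definition dual_elt (phi : E -> R) : Prop :=
  (forall (a : R) (x y : E), phi (a *: x + y) = a * phi x + phi y) /\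
  continuous phi.

Definition equicontinuous_set (K : set (E -> R)) : Prop :=
  forall (x : E) (eps : R), 0 < eps ->
    nbhs x [set y | forall phi, K phi -> `|phi y - phi x| < eps].

(** The weak-star
    topology is the topology of pointwise convergence on E, i.e. the subspace
    topology inherited from the product space {ptws E -> R}. *)
Definition eqc (K : set (E -> R)) : Prop :=
  (forall phi, K phi -> dual_elt phi) /\
  equicontinuous_set K /\
  compact (K : set {ptws E -> R}).

End LCS.

Definition independent_seq (R : realType) (T : Type) (X : set T)
    (f : nat -> T -> R) : Prop :=
  exists a b : R, a < b /\
    forall P M : seq nat, (forall n, n \in P -> n \notin M) ->
      exists2 x, X x &
        (forall n, n \in P -> f n x < a) /\ (forall n, n \in M -> b < f n x).

(** A family F of real functions on X (given as a set of functions) is tame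
    if it contains no independent sequence.  (Boundedness of the family is a
    standing assumption in the paper, not part of the notion.) *)
Definition tame_family (R : realType) (T : Type) (X : set T)
    (F : set (T -> R)) : Prop :=
  ~ exists f : nat -> T -> R, (forall n, F (f n)) /\ independent_seq X f.

Definition tame_set (R : realType) (E : tvsType R) (B : set E) : Prop :=
  forall K : set (E -> R), eqc K ->
    tame_family K [set (fun phi : E -> R => phi b) | b in B].

Definition cont_seminorm (R : realType) (E : tvsType R) (rho : E -> R) : Prop :=
  (forall x y : E, rho (x + y) <= rho x + rho y) /\
  (forall (t : R) (x : E), rho (t *: x) = `|t| * rho x) /\
  continuous rho.

Definition l1_sequence (R : realType) (E : tvsType R) (x : nat -> E) : Prop :=
  tvs_bounded [set x n | n in [set: nat]] /\
  exists rho : E -> R, cont_seminorm rho /\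
    exists2 delta : R, 0 < delta &
      forall (n : nat) (c : nat -> R),
        delta * (\sum_(i < n) `|c i|) <= rho (\sum_(i < n) c i *: x i).

(* If B is not tame, some K in eqc(E^* ) carries an independent sequence
   phi |-> phi (x n) with thresholds a < b, x n in B.  For coefficients c,
   independence gives psi_-, psi_+ in K lying below a on the x n with c n >= 0
   and above b on those with c n < 0, and vice versa; evaluating at
   s = sum c_n x_n yields psi_+ s - psi_- s >= (b - a) sum |c_n|.  Equicontinuity
   of K makes rho_K v := sup_{phi in K} |phi v| a continuous seminorm, and
   2 rho_K s >= psi_+ s - psi_- s, so (x n) is an l^1-sequence. *)
From HB Require Import structures.
From mathcomp Require Import all_boot all_order all_algebra.
From mathcomp Require Import all_classical all_reals all_analysis.
From mathcomp Require Import lra.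

Set Implicit Arguments.
Unset Strict Implicit.
Unset Printing Implicit Defensive.

Import Order.TTheory GRing.Theory Num.Theory.
Import numFieldTopology.Exports numFieldNormedType.Exports.
Local Open Scope classical_set_scope.
Local Open Scope ring_scope.

Section LocallyConvex.
Variables (R : realType) (E : tvsType R).

Section DualElement.
Variable phi : E -> R.
Hypothesis dphi : dual_elt phi.

Lemma dual_elt0 : phi 0 = 0.
Proof.
have := dphi.1 1 0 0; rewrite scale1r addr0 mul1r => h.
by apply: (addrI (phi 0)); rewrite addr0 -h.
Qed.

Lemma dual_eltD (x y : E) : phi (x + y) = phi x + phi y.
Proof. by have := dphi.1 1 x y; rewrite scale1r mul1r. Qed.

Lemma dual_eltZ (t : R) (x : E) : phi (t *: x) = t * phi x.
Proof. by have := dphi.1 t x 0; rewrite !addr0 dual_elt0 addr0. Qed.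

Lemma dual_elt_sum n (c : nat -> R) (x : nat -> E) :
  phi (\sum_(i < n) c i *: x i) = \sum_(i < n) c i * phi (x i).
Proof.
elim: n => [|n IH]; first by rewrite !big_ord0 dual_elt0.
by rewrite !big_ord_recr /= dual_eltD IH dual_eltZ.
Qed.

End DualElement.

Lemma nbhs0_absorbs (U : set E) (v : E) :
  nbhs 0 U -> exists2 s : R, 0 < s & U (s *: v).
Proof.
move=> U0; have /= := scale_continuous ((0 : R^o), v) U.
rewrite scale0r => /(_ U0) [] /= [V W] [[e e0 eV] W1] VWU.
exists (e / 2); first by rewrite divr_gt0.
apply: (VWU (e / 2, v)); split => /=; last exact: nbhs_singleton.
apply: eV => /=; rewrite sub0r normrN ger0_norm ?divr_ge0 ?ltW //.
by rewrite ltr_pdivrMr // ltr_pMr // ltr1n.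
Qed.

Lemma tvs_boundedS (A B : set E) : A `<=` B -> tvs_bounded B -> tvs_bounded A.
Proof.
move=> AB hB U U0; have [r r0 H] := hB U U0.
by exists r => // t tr u /AB; exact: H.
Qed.

Definition sup_seminorm (K : set (E -> R)) (v : E) : R :=
  sup [set `|phi v| | phi in K].

Section SupSeminorm.
Variable K : set (E -> R).
Hypotheses (K0 : K !=set0) (KD : forall phi, K phi -> dual_elt phi)
  (Keq : equicontinuous_set K).

Lemma sup_seminorm_ubound (v : E) : has_ubound [set `|phi v| | phi in K].
Proof.
have [s s0 Us] := nbhs0_absorbs v (Keq 0 ltr01).
exists s^-1 => _ [phi Kphi <-].
move: (Us phi Kphi); rewrite (dual_elt0 (KD Kphi)) subr0 (dual_eltZ (KD Kphi)).
rewrite normrM gtr0_norm // => h.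
by apply/ltW; rewrite -ltr_pdivlMl // mulr1 in h.
Qed.

Lemma le_sup_seminorm (v : E) phi : K phi -> `|phi v| <= sup_seminorm K v.
Proof. by move=> Kphi; apply: ub_le_sup; [exact: sup_seminorm_ubound|exists phi]. Qed.

Lemma sup_seminorm_le (v : E) (c : R) :
  (forall phi, K phi -> `|phi v| <= c) -> sup_seminorm K v <= c.
Proof.
move=> H; case: K0 => phi Kphi.
apply: ge_sup; first by exists `|phi v|, phi.
by move=> _ [psi Kpsi <-]; exact: H.
Qed.

Lemma sup_seminormZ_le (t : R) (x : E) :
  sup_seminorm K (t *: x) <= `|t| * sup_seminorm K x.
Proof.
apply: sup_seminorm_le => phi Kphi; rewrite (dual_eltZ (KD Kphi)) normrM.
by rewrite ler_wpM2l // le_sup_seminorm.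
Qed.

Lemma sup_seminorm_ge0 (x : E) : 0 <= sup_seminorm K x.
Proof. by case: K0 => phi Kphi; exact: le_trans (le_sup_seminorm x Kphi). Qed.

Lemma sup_seminorm_dist_le (v w : E) (e : R) :
  (forall phi, K phi -> `|phi w - phi v| < e) ->
  `|sup_seminorm K w - sup_seminorm K v| <= e.
Proof.
move=> Hw; have Kle u u' :
    (forall phi, K phi -> `|phi u - phi u'| < e) ->
    sup_seminorm K u <= sup_seminorm K u' + e.
  move=> Hu; apply: sup_seminorm_le => phi Kphi; rewrite -lerBlDl.
  apply: le_trans (ltW (Hu phi Kphi)); apply: le_trans (lerB_dist _ _).
  by apply: lerB => //; exact: le_sup_seminorm.
have Hv phi : K phi -> `|phi v - phi w| < e by rewrite distrC; exact: Hw.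
have := Kle w v Hw; have := Kle v w Hv.
by rewrite ler_norml => h1 h2; apply/andP; split; lra.
Qed.

Lemma sup_seminorm_cont_seminorm : cont_seminorm (sup_seminorm K).
Proof.
split; [|split].
- move=> x y; apply: sup_seminorm_le => phi Kphi; rewrite (dual_eltD (KD Kphi)).
  apply: le_trans (ler_normD _ _) _.
  by apply: lerD; exact: le_sup_seminorm.
- move=> t x; apply/eqP; rewrite eq_le sup_seminormZ_le /=.
  have [->|t0] := eqVneq t 0; first by rewrite normr0 mul0r sup_seminorm_ge0.
  rewrite -ler_pdivlMl ?normr_gt0 // -normrV ?unitfE //.
  by have := sup_seminormZ_le t^-1 (t *: x); rewrite scalerA mulVf // scale1r.
- move=> v; apply/cvgrPdist_lt => e e0.
  have e2 : 0 < e / 2 by rewrite divr_gt0.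
  apply: filterS (Keq v e2) => w Hw; rewrite distrC.
  apply: le_lt_trans (sup_seminorm_dist_le Hw) _.
  by rewrite ltr_pdivrMr // ltr_pMr // ltr1n.
Qed.

End SupSeminorm.

(* Choosing P = {i : c i >= 0} and M = {i : c i < 0} (and the reverse) in the
   definition of independence. *)
Lemma independent_sum_gap (K : set (E -> R)) (x : nat -> E) (a b : R) n
    (c : nat -> R) :
  (forall phi, K phi -> dual_elt phi) ->
  (forall P M : seq nat, (forall i, i \in P -> i \notin M) ->
    exists2 phi, K phi &
      (forall i, i \in P -> phi (x i) < a) /\
      (forall i, i \in M -> b < phi (x i))) ->
  exists psi_lo, exists2 psi_hi, K psi_lo /\ K psi_hi &
    (b - a) * (\sum_(i < n) `|c i|) <=
      psi_hi (\sum_(i < n) c i *: x i) - psi_lo (\sum_(i < n) c i *: x i).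
Proof.
move=> KD ind.
pose P := [seq i <- iota 0 n | 0 <= c i].
pose M := [seq i <- iota 0 n | c i < 0].
have dPM i : i \in P -> i \notin M.
  by rewrite !mem_filter => /andP[ci _]; apply/negP => /andP[]; rewrite ltNge ci.
have dMP i : i \in M -> i \notin P by move=> iM; apply/negP => /dPM; rewrite iM.
have [lo Klo [lo_P lo_M]] := ind P M dPM.
have [hi Khi [hi_M hi_P]] := ind M P dMP.
exists lo, hi => //.
rewrite (dual_elt_sum (KD _ Klo)) (dual_elt_sum (KD _ Khi)) -sumrB mulr_sumr.
apply: ler_sum => i _.
have iin : (i : nat) \in iota 0 n by rewrite mem_iota add0n ltn_ord.
have [ci|ci] := lerP 0 (c i).
  have iP : (i : nat) \in P by rewrite mem_filter ci iin.
  by have := lo_P _ iP; have := hi_P _ iP; rewrite ger0_norm // => h1 h2; nra.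
have iM : (i : nat) \in M by rewrite mem_filter ci iin.
by have := lo_M _ iM; have := hi_M _ iM; rewrite ltr0_norm // => h1 h2; nra.
Qed.

Lemma independent_eval_l1_bound (K : set (E -> R)) (x : nat -> E) :
  (forall phi, K phi -> dual_elt phi) -> equicontinuous_set K ->
  independent_seq K (fun n (phi : E -> R) => phi (x n)) ->
  exists rho : E -> R, cont_seminorm rho /\
    exists2 delta : R, 0 < delta &
      forall (n : nat) (c : nat -> R),
        delta * (\sum_(i < n) `|c i|) <= rho (\sum_(i < n) c i *: x i).
Proof.
move=> KD Keq [a [b [ab ind]]].
have K0 : K !=set0.
  by have [phi Kphi _] := ind [::] [::] (fun _ _ => isT); exists phi.
exists (sup_seminorm K); split; first exact: sup_seminorm_cont_seminorm.
exists ((b - a) / 2); first by rewrite divr_gt0 // subr_gt0.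
move=> n c; have [lo [hi [Klo Khi] gap]] := independent_sum_gap n c KD ind.
move: gap; set s := \sum_(i < n) c i *: x i; set S := \sum_(i < n) `|c i|.
have hi_le := le_sup_seminorm KD Keq s Khi.
have lo_le := le_sup_seminorm KD Keq s Klo.
have h1 := ler_norm (hi s); have h2 : - lo s <= `|lo s| by rewrite -normrN ler_norm.
by rewrite mulrAC ler_pdivrMr //; lra.
Qed.

End LocallyConvex.

Theorem theorem6p2 (R : realType) (E : tvsType R) (B : set E) :
  tvs_bounded B ->
  tame_set B \/
  exists x : nat -> E, (forall n, B (x n)) /\ l1_sequence x.
Proof.
move=> hB; have [|not_tame] := pselect (tame_set B); [by left|right].
move: not_tame => /existsNP [K] /not_implyP [[KD [Keq _]]] /contrapT [f [Bf indf]].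
have /choice [x hx] n : exists y, B y /\ (fun phi : E -> R => phi y) = f n.
  by have [y By e] := Bf n; exists y.
have fE : f = fun n (phi : E -> R) => phi (x n).
  by apply: funext => n; rewrite -(hx n).2.
exists x; split; first by move=> n; exact: (hx n).1.
split; last by rewrite fE in indf; exact: (independent_eval_l1_bound KD Keq indf).
by apply: (tvs_boundedS _ hB) => _ [n _ <-]; exact: (hx n).1.
Qed.
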